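(* Let $\varrho\in C^2(\mathbb{C};\mathbb{C})$ be neither holomorphic, nor antiholomorphic, nor $\mathbb{R}$-affine. Let $K\subseteq\mathbb{C}$ be compact and $\varepsilon>0$. Then there are $\mathbb{C}$-affine maps $\phi:\mathbb{C}\to\mathbb{C}^2$ and $\psi:\mathbb{C}^2\to\mathbb{C}^2$ such that $\sup_{z\in K}\|(\psi\circ\varrho^{\times2}\circ\phi)(z)-(z,\overline{z})\|_{\mathbb{C}^2}<\varepsilon$.
   Context: $\varrho$ is antiholomorphic if $\overline{\varrho}$ is holomorphic; $\varrho$ is $\mathbb{R}$-affine if it is affine as a map $\mathbb{R}^2\to\mathbb{R}^2$ under $\mathbb{C}\cong\mathbb{R}^2$. A map $\mathbb{C}^a\to\mathbb{C}^b$ is $\mathbb{C}$-affine if it has the form $z\mapsto Az+b$ with complex $A,b$. $\varrho^{\times2}(z_1,z_2)=(\varrho(z_1),\varrho(z_2))$. *)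

From Stdlib Require Import Reals List.
From Coquelicot Require Import Coquelicot.
Open Scope R_scope.

Definition reP (f : C -> C) (x y : R) : R := fst (f (x, y)).
Definition imP (f : C -> C) (x y : R) : R := snd (f (x, y)).

Definition C2_real (g : R -> R -> R) : Prop :=
  exists g1 g2 g11 g12 g21 g22 : R -> R -> R,
    (forall x y, is_derive (fun t => g t y) x (g1 x y)) /\
    (forall x y, is_derive (fun t => g x t) y (g2 x y)) /\
    (forall x y, is_derive (fun t => g1 t y) x (g11 x y)) /\
    (forall x y, is_derive (fun t => g1 x t) y (g12 x y)) /\
    (forall x y, is_derive (fun t => g2 t y) x (g21 x y)) /\
    (forall x y, is_derive (fun t => g2 x t) y (g22 x y)) /\
    (forall h, In h (g :: g1 :: g2 :: g11 :: g12 :: g21 :: g22 :: nil) ->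
       forall p : R * R, continuous (fun q : R * R => h (fst q) (snd q)) p).

Definition C2_CC (f : C -> C) : Prop := C2_real (reP f) /\ C2_real (imP f).

Definition holomorphic (f : C -> C) : Prop :=
  forall z : C, ex_derive (K := C_AbsRing) (V := C_NormedModule) f z.

Definition antiholomorphic (f : C -> C) : Prop :=
  holomorphic (fun z => Cconj (f z)).

Definition R_affine (f : C -> C) : Prop :=
  exists m11 m12 m21 m22 b1 b2 : R, forall x y : R,
    f (x, y) = (m11 * x + m12 * y + b1, m21 * x + m22 * y + b2).

Definition compactC (K : C -> Prop) : Prop :=
  forall (I : Type) (U : I -> C -> Prop),
    (forall i, open (U i)) ->
    (forall z, K z -> exists i, U i z) ->
    exists l : list I, forall z, K z -> exists i, In i l /\ U i z.

Definition normC2 (w : C * C) : R :=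
  sqrt (Cmod (fst w) ^ 2 + Cmod (snd w) ^ 2).

Definition times2 (f : C -> C) (w : C * C) : C * C := (f (fst w), f (snd w)).

Definition C_affine_1_2 (phi : C -> C * C) : Prop :=
  exists a1 a2 b1 b2 : C, forall z : C,
    phi z = (Cplus (Cmult a1 z) b1, Cplus (Cmult a2 z) b2).

Definition C_affine_2_2 (psi : C * C -> C * C) : Prop :=
  exists a11 a12 a21 a22 c1 c2 : C, forall w : C * C,
    psi w = (Cplus (Cplus (Cmult a11 (fst w)) (Cmult a12 (snd w))) c1,
             Cplus (Cplus (Cmult a21 (fst w)) (Cmult a22 (snd w))) c2).

Definition subC2 (u v : C * C) : C * C :=
  (Cminus (fst u) (fst v), Cminus (snd u) (snd v)).

(* Write rho(z0 + u) = rho(z0) + a u + b conj(u) + o(|u|), where a and b are the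
   Wirtinger derivatives of rho at z0.  Since rho is C^2 (C^1 suffices), such an
   expansion holds at every point.  If b vanished everywhere rho would be
   holomorphic, and if a vanished everywhere it would be antiholomorphic; hence
   there are points z1, z2 with a1 <> 0 and b2 <> 0.  Probing rho near z1 and z2
   in directions al1, al2 at scale h, i.e. phi(z) = (z1 + h al1 z, z2 + h al2 z),
   gives rho^{x2}(phi z) = (rho z1, rho z2) + h M (z, conj z) + o(h) uniformly on
   the compact K, where M = [[a1 al1, b1 conj al1], [a2 al2, b2 conj al2]].  The
   directions can be chosen (al1 = 1, al2 in {1, i}) so that M is invertible, and
   psi(w) = M^-1 (w - (rho z1, rho z2)) / h then does the job for h small. *)

From Stdlib Require Import Reals Lra Lia List Classical.
From Coquelicot Require Import Coquelicot.
Open Scope R_scope.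

Definition frechet_at (g : R -> R -> R) (x y l1 l2 : R) : Prop :=
  forall e, 0 < e -> exists d, 0 < d /\
    forall s t, Rabs s < d -> Rabs t < d ->
      Rabs (g (x + s) (y + t) - g x y - (l1 * s + l2 * t)) <= e * (Rabs s + Rabs t).

Lemma continuous2_near (h : R -> R -> R) (x y : R) :
  continuous (fun q : R * R => h (fst q) (snd q)) (x, y) ->
  forall e, 0 < e -> exists d, 0 < d /\
    forall u v, Rabs (u - x) < d -> Rabs (v - y) < d -> Rabs (h u v - h x y) < e.
Proof.
  intros Hc e He.
  destruct (proj2 (continuity_2d_pt_filterlim h x y) Hc (mkposreal e He)) as [d Hd].
  exists d; split; [apply cond_pos | intros; apply Hd; assumption].
Qed.

Lemma mean_value (f df : R -> R) (a b : R) :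
  (forall x, is_derive f x (df x)) ->
  exists c, Rabs (c - a) <= Rabs (b - a) /\ f b - f a = df c * (b - a).
Proof.
  intros Hd.
  assert (Hcont : forall x, continuity_pt f x).
  { intros x. apply continuity_pt_filterlim.
    apply (ex_derive_continuous (K := R_AbsRing) (V := R_NormedModule)).
    exists (df x); apply Hd. }
  destruct (MVT_gen f a b df) as [c [Hc Hmvt]]; [intros; apply Hd | intros; apply Hcont |].
  exists c; split; [| exact Hmvt].
  unfold Rmin, Rmax in Hc; destruct (Rle_dec a b);
    unfold Rabs; repeat destruct Rcase_abs; lra.
Qed.

(* A function with partial derivatives everywhere, continuous at (x, y), is
   Frechet differentiable there (mean value theorem along an L-shaped path). *)
Lemma frechet_of_partials (g g1 g2 : R -> R -> R) (x y : R) :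
  (forall u v, is_derive (fun t => g t v) u (g1 u v)) ->
  (forall u v, is_derive (fun t => g u t) v (g2 u v)) ->
  continuous (fun q : R * R => g1 (fst q) (snd q)) (x, y) ->
  continuous (fun q : R * R => g2 (fst q) (snd q)) (x, y) ->
  frechet_at g x y (g1 x y) (g2 x y).
Proof.
  intros H1 H2 C1 C2 e He.
  destruct (continuous2_near _ _ _ C1 e He) as [d1 [Hd1 N1]].
  destruct (continuous2_near _ _ _ C2 e He) as [d2 [Hd2 N2]].
  exists (Rmin d1 d2); split; [apply Rmin_glb_lt; assumption |].
  intros s t Hs Ht.
  pose proof (Rmin_l d1 d2); pose proof (Rmin_r d1 d2).
  destruct (mean_value (fun u => g u (y + t)) (fun u => g1 u (y + t)) x (x + s))
    as [c [Hc Ec]]; [intros; apply H1 |].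
  destruct (mean_value (fun v => g x v) (fun v => g2 x v) y (y + t))
    as [c' [Hc' Ec']]; [intros; apply H2 |].
  replace (x + s - x) with s in * by ring.
  replace (y + t - y) with t in * by ring.
  assert (E1 : Rabs (g1 c (y + t) - g1 x y) < e).
  { apply N1; [lra | replace (y + t - y) with t by ring; lra]. }
  assert (E2 : Rabs (g2 x c' - g2 x y) < e).
  { apply N2; [replace (x - x) with 0 by ring; rewrite Rabs_R0 |]; lra. }
  replace (g (x + s) (y + t) - g x y - (g1 x y * s + g2 x y * t))
    with ((g1 c (y + t) - g1 x y) * s + (g2 x c' - g2 x y) * t) by lra.
  eapply Rle_trans; [apply Rabs_triang |]. rewrite !Rabs_mult.
  pose proof (Rabs_pos s); pose proof (Rabs_pos t). nra.
Qed.

Lemma frechet_of_C2 (g : R -> R -> R) :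
  C2_real g -> exists g1 g2 : R -> R -> R, forall x y, frechet_at g x y (g1 x y) (g2 x y).
Proof.
  intros [g1 [g2 [g11 [g12 [g21 [g22 [H1 [H2 [_ [_ [_ [_ Hc]]]]]]]]]]]].
  exists g1, g2; intros x y.
  apply frechet_of_partials; auto; apply Hc; simpl; auto.
Qed.

Lemma Cmod_le_abs_sum (a b : R) : Cmod (a, b) <= Rabs a + Rabs b.
Proof.
  unfold Cmod; simpl.
  pose proof (Rabs_pos a); pose proof (Rabs_pos b).
  rewrite <- (sqrt_pow2 (Rabs a + Rabs b)) by lra.
  apply sqrt_le_1_alt.
  assert (Ea : a * a = Rabs a * Rabs a) by (rewrite <- Rabs_mult, Rabs_right; nra).
  assert (Eb : b * b = Rabs b * Rabs b) by (rewrite <- Rabs_mult, Rabs_right; nra).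
  nra.
Qed.

Lemma abs_sum_le_Cmod (a b : R) : Rabs a + Rabs b <= 2 * Cmod (a, b).
Proof.
  pose proof (Rmax_Cmod (a, b)) as H; simpl in H.
  pose proof (Rmax_l (Rabs a) (Rabs b)); pose proof (Rmax_r (Rabs a) (Rabs b)). lra.
Qed.

(* f(z0 + u) = f(z0) + a u + b conj(u) + o(|u|): f is real-differentiable at z0
   with Wirtinger derivatives a = df/dz and b = df/dconj(z). *)
Definition linearizes (f : C -> C) (z0 a b : C) : Prop :=
  forall e, 0 < e -> exists d, 0 < d /\ forall u, Cmod u < d ->
    Cmod (f (Cplus u z0) - f z0 - (a * u + b * Cconj u))%C <= e * Cmod u.

(* The Wirtinger derivatives computed from the real partials of Re f (P1, P2)
   and Im f (Q1, Q2). *)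
Definition wirt_a (P1 P2 Q1 Q2 : R) : C := ((P1 + Q2) / 2, (Q1 - P2) / 2).
Definition wirt_b (P1 P2 Q1 Q2 : R) : C := ((P1 - Q2) / 2, (Q1 + P2) / 2).

Lemma linearizes_of_frechet (f : C -> C) (x y P1 P2 Q1 Q2 : R) :
  frechet_at (reP f) x y P1 P2 -> frechet_at (imP f) x y Q1 Q2 ->
  linearizes f (x, y) (wirt_a P1 P2 Q1 Q2) (wirt_b P1 P2 Q1 Q2).
Proof.
  intros HP HQ e He.
  destruct (HP (e / 4) ltac:(lra)) as [d1 [Hd1 D1]].
  destruct (HQ (e / 4) ltac:(lra)) as [d2 [Hd2 D2]].
  exists (Rmin d1 d2); split; [apply Rmin_glb_lt; assumption |].
  intros [s t] Hu.
  pose proof (Rmin_l d1 d2); pose proof (Rmin_r d1 d2).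
  pose proof (Rmax_Cmod (s, t)) as Hmax; simpl in Hmax.
  pose proof (Rmax_l (Rabs s) (Rabs t)); pose proof (Rmax_r (Rabs s) (Rabs t)).
  specialize (D1 s t ltac:(lra) ltac:(lra)). specialize (D2 s t ltac:(lra) ltac:(lra)).
  pose proof (abs_sum_le_Cmod s t).
  unfold reP, imP in D1, D2.
  replace (Cplus (s, t) (x, y)) with (x + s, y + t) by (unfold Cplus; simpl; f_equal; ring).
  destruct (f (x + s, y + t)) as [f1 f2]; destruct (f (x, y)) as [g1 g2]; simpl in D1, D2.
  eapply Rle_trans; [apply Cmod_le_abs_sum |].
  unfold wirt_a, wirt_b, Cminus, Cplus, Copp, Cmult, Cconj; simpl.
  replace (f1 + - g1 + - ((P1 + Q2) / 2 * s - (Q1 - P2) / 2 * t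
             + ((P1 - Q2) / 2 * s - (Q1 + P2) / 2 * - t)))
    with (f1 - g1 - (P1 * s + P2 * t)) by field.
  replace (f2 + - g2 + - ((P1 + Q2) / 2 * t + (Q1 - P2) / 2 * s
             + ((P1 - Q2) / 2 * - t + (Q1 + P2) / 2 * s)))
    with (f2 - g2 - (Q1 * s + Q2 * t)) by field.
  assert (e / 4 * (Rabs s + Rabs t) <= e / 2 * Cmod (s, t)) by nra.
  lra.
Qed.

Lemma linearizes_of_C2 (f : C -> C) :
  C2_CC f -> exists a b : C -> C, forall z, linearizes f z (a z) (b z).
Proof.
  intros [HP HQ].
  destruct (frechet_of_C2 _ HP) as [P1 [P2 DP]].
  destruct (frechet_of_C2 _ HQ) as [Q1 [Q2 DQ]].
  exists (fun z => wirt_a (P1 (fst z) (snd z)) (P2 (fst z) (snd z))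
                          (Q1 (fst z) (snd z)) (Q2 (fst z) (snd z))),
         (fun z => wirt_b (P1 (fst z) (snd z)) (P2 (fst z) (snd z))
                          (Q1 (fst z) (snd z)) (Q2 (fst z) (snd z))).
  intros [x y]; apply linearizes_of_frechet; auto.
Qed.

Lemma linearizes_conj (f : C -> C) (z0 a b : C) :
  linearizes f z0 a b -> linearizes (fun z => Cconj (f z)) z0 (Cconj b) (Cconj a).
Proof.
  intros H e He. destruct (H e He) as [d [Hd Hf]].
  exists d; split; [assumption |]. intros u Hu.
  rewrite <- Cmod_conj.
  replace (Cconj (Cconj (f (Cplus u z0)) - Cconj (f z0) - (Cconj b * u + Cconj a * Cconj u)))
    with (f (Cplus u z0) - f z0 - (a * u + b * Cconj u))%C; [apply Hf; assumption |].
  destruct (f (Cplus u z0)), (f z0), a, b, u.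
  unfold Cconj, Cminus, Cplus, Copp, Cmult; simpl; f_equal; ring.
Qed.

Lemma ex_derive_of_linearizes (f : C -> C) (z0 a : C) :
  linearizes f z0 a 0%C -> ex_derive (K := C_AbsRing) (V := C_NormedModule) f z0.
Proof.
  intros H. exists a. split; [apply is_linear_scal_l |].
  intros z1 Hz1.
  apply (is_filter_lim_locally_unique (K := C_AbsRing)
           (V := AbsRing_NormedModule C_AbsRing)) in Hz1; subst z1.
  intros eps. destruct (H eps (cond_pos eps)) as [d [Hd Hf]].
  exists (mkposreal d Hd). intros z Hz. change C in z.
  change (Cmod (z - z0)%C < d) in Hz.
  specialize (Hf _ Hz).
  replace (Cplus (z - z0)%C z0) with z in Hf by ring.
  change (norm ?w) with (Cmod w).
  unfold minus, plus, opp, scal; simpl; unfold mult; simpl.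
  replace (f z + - f z0 + - ((z + - z0) * a))%C
    with (f z - f z0 - (a * (z - z0) + 0 * Cconj (z - z0)))%C by ring.
  exact Hf.
Qed.

Lemma wirtinger_points (f : C -> C) :
  C2_CC f -> ~ holomorphic f -> ~ antiholomorphic f ->
  exists z1 z2 a1 b1 a2 b2 : C,
    linearizes f z1 a1 b1 /\ linearizes f z2 a2 b2 /\ a1 <> 0%C /\ b2 <> 0%C.
Proof.
  intros HC Hhol Hanti.
  destruct (linearizes_of_C2 f HC) as [a [b Hab]].
  assert (Ha : exists z1, a z1 <> 0%C).
  { apply NNPP; intros Hnone. apply Hanti; intros z.
    assert (Ez : Cconj (a z) = 0%C).
    { apply NNPP; intros Hz; apply Hnone; exists z; intros E.
      apply Hz; rewrite E; unfold Cconj, RtoC; simpl; f_equal; ring. }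
    apply (ex_derive_of_linearizes _ z (Cconj (b z))).
    rewrite <- Ez. apply linearizes_conj, Hab. }
  assert (Hb : exists z2, b z2 <> 0%C).
  { apply NNPP; intros Hnone. apply Hhol; intros z.
    assert (Ez : b z = 0%C) by (apply NNPP; intros Hz; apply Hnone; exists z; assumption).
    apply (ex_derive_of_linearizes _ z (a z)).
    rewrite <- Ez. apply Hab. }
  destruct Ha as [z1 Ha1]; destruct Hb as [z2 Hb2].
  exists z1, z2, (a z1), (b z1), (a z2), (b z2); auto.
Qed.

Lemma open_Cmod_lt (r : R) : open (fun z : C => Cmod z < r).
Proof.
  intros z Hz. change C in z.
  assert (Hd : 0 < (r - Cmod z) / 2) by lra.
  exists (mkposreal _ Hd). intros w [B1 B2]; change C in w; simpl in B1, B2.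
  change (Rabs (fst w - fst z) < (r - Cmod z) / 2) in B1.
  change (Rabs (snd w - snd z) < (r - Cmod z) / 2) in B2.
  pose proof (Cmod_triangle z (w - z)%C) as T.
  replace (z + (w - z))%C with w in T by ring.
  destruct w as [w1 w2], z as [z1 z2].
  pose proof (Cmod_le_abs_sum (w1 - z1) (w2 - z2)).
  replace (w1 - z1, w2 - z2) with ((w1, w2) - (z1, z2))%C in *
    by (unfold Cminus, Cplus, Copp; simpl; f_equal).
  simpl in B1, B2. lra.
Qed.

Lemma nat_list_bound (l : list nat) : exists M, forall i, In i l -> (i <= M)%nat.
Proof.
  induction l as [| a l [M HM]]; [exists 0%nat; intros i [] |].
  exists (Nat.max a M); intros i [<- | Hi]; [lia | specialize (HM i Hi); lia].
Qed.

(* Compact subsets of C are bounded (cover K by the discs |z| < n). *)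
Lemma compact_bounded (K : C -> Prop) :
  compactC K -> exists N, 0 < N /\ forall z, K z -> Cmod z <= N.
Proof.
  intros HK.
  destruct (HK nat (fun n z => Cmod z < INR n)) as [l Hl].
  - intros n; apply open_Cmod_lt.
  - intros z _. destruct (INR_unbounded (Cmod z)) as [n Hn]. exists n; assumption.
  - destruct (nat_list_bound l) as [M HM].
    exists (INR M + 1); split; [pose proof (pos_INR M); lra |].
    intros z Hz. destruct (Hl z Hz) as [i [Hi Hzi]].
    pose proof (le_INR _ _ (HM i Hi)); lra.
Qed.

Lemma linearizes_uniform (f : C -> C) (z0 a b : C) (N : R) :
  linearizes f z0 a b -> 0 < N ->
  forall e, 0 < e -> exists h0, 0 < h0 /\ forall (h : R) (w : C), 0 < h < h0 -> Cmod w <= N ->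
    Cmod (f (Cplus (h * w) z0) - f z0 - (a * (h * w) + b * Cconj (h * w)))%C <= e * h.
Proof.
  intros Hlin HN e He.
  destruct (Hlin (e / N) ltac:(apply Rdiv_lt_0_compat; assumption)) as [d [Hd Hf]].
  exists (d / N); split; [apply Rdiv_lt_0_compat; assumption |].
  intros h w [Hh Hhd] Hw.
  assert (Hhw : Cmod (h * w)%C = h * Cmod w)
    by (rewrite Cmod_mult, Cmod_R, Rabs_right; lra).
  assert (HhN : h * Cmod w <= h * N) by (apply Rmult_le_compat_l; lra).
  assert (Hsmall : h * N < d) by (apply (Rmult_lt_compat_r N) in Hhd; [field_simplify in Hhd |]; lra).
  eapply Rle_trans; [apply Hf; lra |].
  rewrite Hhw. replace (e * h) with (e / N * (h * N)) by (field; lra).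
  apply Rmult_le_compat_l; [left; apply Rdiv_lt_0_compat |]; assumption.
Qed.

Definition probe (h : R) (al1 al2 z1 z2 : C) (z : C) : C * C :=
  (Cplus (Cmult (h * al1) z) z1, Cplus (Cmult (h * al2) z) z2).

Definition unscale (h : R) (m11 m12 m21 m22 c1 c2 : C) (w : C * C) : C * C :=
  (((m11 * (fst w - c1) + m12 * (snd w - c2)) / h),
   ((m21 * (fst w - c1) + m22 * (snd w - c2)) / h))%C.

Lemma probe_affine (h : R) (al1 al2 z1 z2 : C) : C_affine_1_2 (probe h al1 al2 z1 z2).
Proof. do 4 eexists; intros; reflexivity. Qed.

Lemma unscale_affine (h : R) (m11 m12 m21 m22 c1 c2 : C) :
  C_affine_2_2 (unscale h m11 m12 m21 m22 c1 c2).
Proof.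
  exists (m11 / h)%C, (m12 / h)%C, (m21 / h)%C, (m22 / h)%C,
         (- (m11 * c1 + m12 * c2) / h)%C, (- (m21 * c1 + m22 * c2) / h)%C.
  intros w; unfold unscale; f_equal; unfold Cdiv; ring.
Qed.

Lemma unscale_residual (h : R) (m11 m12 m21 m22 c1 c2 r1 r2 v1 v2 : C) :
  h <> 0 ->
  unscale h m11 m12 m21 m22 c1 c2 (c1 + r1 + h * v1, c2 + r2 + h * v2)%C =
  ((m11 * r1 + m12 * r2) / h + (m11 * v1 + m12 * v2),
   (m21 * r1 + m22 * r2) / h + (m21 * v1 + m22 * v2))%C.
Proof.
  intros Hh. assert (HhC : RtoC h <> 0%C) by (intros E; apply Hh; injection E; auto).
  unfold unscale; simpl; f_equal; field; assumption.
Qed.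

Lemma inverse_2x2 (p1 q1 p2 q2 u v : C) :
  (p1 * q2 - q1 * p2)%C <> 0%C ->
  let D := (p1 * q2 - q1 * p2)%C in
  ((q2 / D) * (p1 * u + q1 * v) + (- q1 / D) * (p2 * u + q2 * v) = u /\
   (- p2 / D) * (p1 * u + q1 * v) + (p1 / D) * (p2 * u + q2 * v) = v)%C.
Proof. intros HD D; split; unfold D; field; assumption. Qed.

Lemma conj_RtoC (h : R) : Cconj (RtoC h) = RtoC h.
Proof. unfold Cconj, RtoC; simpl; f_equal; ring. Qed.

Lemma scaled_linear_part (a b al z : C) (h : R) :
  (a * (h * (al * z)) + b * Cconj (h * (al * z)))%C =
  (h * (a * al * z + b * Cconj al * Cconj z))%C.
Proof. rewrite !Cmult_conj, conj_RtoC; ring. Qed.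

Lemma normC2_le_sum (w : C * C) : normC2 w <= Cmod (fst w) + Cmod (snd w).
Proof.
  change (normC2 w) with (Cmod (Cmod (fst w), Cmod (snd w))).
  eapply Rle_trans; [apply Cmod_le_abs_sum |].
  rewrite !Rabs_right; try apply Rle_ge, Cmod_ge_0; lra.
Qed.

Lemma residual_bound (m n r1 r2 : C) (h e : R) :
  0 < h -> Cmod r1 <= e * h -> Cmod r2 <= e * h ->
  Cmod ((m * r1 + n * r2) / h)%C <= (Cmod m + Cmod n) * e.
Proof.
  intros Hh H1 H2.
  assert (HhC : RtoC h <> 0%C) by (intros E; injection E; lra).
  rewrite Cmod_div, Cmod_R, Rabs_right by (assumption || lra).
  apply Rle_div_l; [assumption |].
  eapply Rle_trans; [apply Cmod_triangle |]. rewrite !Cmod_mult.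
  pose proof (Cmod_ge_0 m); pose proof (Cmod_ge_0 n). nra.
Qed.

Lemma separating_probe (f : C -> C) (K : C -> Prop) (eps : R) (z1 z2 a1 b1 a2 b2 al1 al2 : C) :
  linearizes f z1 a1 b1 -> linearizes f z2 a2 b2 ->
  (a1 * al1 * (b2 * Cconj al2) - b1 * Cconj al1 * (a2 * al2))%C <> 0%C ->
  compactC K -> 0 < eps ->
  exists (phi : C -> C * C) (psi : C * C -> C * C),
    C_affine_1_2 phi /\ C_affine_2_2 psi /\
    exists delta : R, delta < eps /\
      forall z : C, K z -> normC2 (subC2 (psi (times2 f (phi z))) (z, Cconj z)) <= delta.
Proof.
  intros Lin1 Lin2 HD HK Heps.
  set (p1 := (a1 * al1)%C) in HD; set (q1 := (b1 * Cconj al1)%C) in HD.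
  set (p2 := (a2 * al2)%C) in HD; set (q2 := (b2 * Cconj al2)%C) in HD.
  set (D := (p1 * q2 - q1 * p2)%C) in HD.
  set (S := Cmod (q2 / D) + Cmod (- q1 / D) + Cmod (- p2 / D) + Cmod (p1 / D) + 1).
  assert (HS : 0 < S)
    by (unfold S; pose proof (Cmod_ge_0 (q2 / D)); pose proof (Cmod_ge_0 (- q1 / D));
        pose proof (Cmod_ge_0 (- p2 / D)); pose proof (Cmod_ge_0 (p1 / D)); lra).
  set (e := eps / (2 * S)).
  assert (He : 0 < e) by (unfold e; apply Rdiv_lt_0_compat; lra).
  destruct (compact_bounded K HK) as [N [HN HKN]].
  destruct (linearizes_uniform f z1 a1 b1 ((Cmod al1 + 1) * N) Lin1
              ltac:(pose proof (Cmod_ge_0 al1); nra) e He) as [h1 [Hh1 U1]].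
  destruct (linearizes_uniform f z2 a2 b2 ((Cmod al2 + 1) * N) Lin2
              ltac:(pose proof (Cmod_ge_0 al2); nra) e He) as [h2 [Hh2 U2]].
  set (h := Rmin h1 h2 / 2).
  assert (Hh : 0 < h < h1 /\ 0 < h < h2)
    by (unfold h; pose proof (Rmin_l h1 h2); pose proof (Rmin_r h1 h2);
        pose proof (Rmin_glb_lt _ _ _ Hh1 Hh2); lra).
  exists (probe h al1 al2 z1 z2),
         (unscale h (q2 / D) (- q1 / D) (- p2 / D) (p1 / D) (f z1) (f z2))%C.
  split; [apply probe_affine | split; [apply unscale_affine |]].
  exists (eps / 2); split; [lra |].
  intros z Hz.
  (* each probe stays in the disc where the linearization error is at most e h *)
  assert (Hw : forall al, Cmod (al * z)%C <= (Cmod al + 1) * N).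
  { intros al. rewrite Cmod_mult. pose proof (HKN z Hz); pose proof (Cmod_ge_0 al).
    pose proof (Cmod_ge_0 z). nra. }
  set (r1 := (f (Cplus (h * (al1 * z)) z1) - f z1 - (a1 * (h * (al1 * z)) + b1 * Cconj (h * (al1 * z))))%C).
  set (r2 := (f (Cplus (h * (al2 * z)) z2) - f z2 - (a2 * (h * (al2 * z)) + b2 * Cconj (h * (al2 * z))))%C).
  assert (R1 : Cmod r1 <= e * h) by (apply U1; [lra | apply Hw]).
  assert (R2 : Cmod r2 <= e * h) by (apply U2; [lra | apply Hw]).
  assert (Ef : times2 f (probe h al1 al2 z1 z2 z) =
               (f z1 + r1 + h * (p1 * z + q1 * Cconj z),
                f z2 + r2 + h * (p2 * z + q2 * Cconj z))%C).
  { unfold r1, r2, p1, q1, p2, q2, probe, times2; simpl.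
    rewrite <- !scaled_linear_part.
    replace (h * al1 * z)%C with (h * (al1 * z))%C by ring.
    replace (h * al2 * z)%C with (h * (al2 * z))%C by ring.
    f_equal; ring. }
  rewrite Ef, unscale_residual by lra.
  destruct (inverse_2x2 p1 q1 p2 q2 z (Cconj z) HD) as [Inv1 Inv2]. fold D in Inv1, Inv2.
  rewrite Inv1, Inv2.
  eapply Rle_trans; [apply normC2_le_sum |]. unfold subC2; simpl.
  replace (_ + z - z)%C with ((q2 / D * r1 + - q1 / D * r2) / h)%C by ring.
  replace (_ + Cconj z - Cconj z)%C with ((- p2 / D * r1 + p1 / D * r2) / h)%C by ring.
  pose proof (residual_bound (q2 / D) (- q1 / D) r1 r2 h e ltac:(lra) R1 R2).
  pose proof (residual_bound (- p2 / D) (p1 / D) r1 r2 h e ltac:(lra) R1 R2).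
  assert (Se : S * e = eps / 2) by (unfold e; field; lra).
  unfold S in Se. nra.
Qed.

(* Directions making M invertible: al1 = 1, and al2 = 1 unless that makes the
   determinant vanish, in which case al2 = i. *)
Lemma separating_directions (a1 b1 a2 b2 : C) :
  a1 <> 0%C -> b2 <> 0%C ->
  exists al1 al2 : C, (a1 * al1 * (b2 * Cconj al2) - b1 * Cconj al1 * (a2 * al2))%C <> 0%C.
Proof.
  intros Ha1 Hb2. exists (RtoC 1).
  assert (Hi : Cconj Ci = (- Ci)%C) by (unfold Cconj, Ci, Copp; simpl; f_equal; ring).
  destruct (classic ((a1 * b2)%C = (b1 * a2)%C)) as [E | E].
  - (* the determinant vanishes for al2 = 1, so turn the second direction by i *)
    exists Ci. rewrite conj_RtoC, Hi.
    replace (a1 * 1 * (b2 * - Ci) - b1 * 1 * (a2 * Ci))%C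
      with (- Ci * (a1 * b2) - Ci * (b1 * a2))%C by ring.
    rewrite <- E. replace (- Ci * (a1 * b2) - Ci * (a1 * b2))%C
      with (- (2 * Ci) * (a1 * b2))%C by ring.
    apply Cmult_neq_0; [| apply Cmult_neq_0; assumption].
    intros Z. apply (f_equal Cmod) in Z.
    rewrite Cmod_opp, Cmod_mult, Cmod_Ci, Cmod_R, Cmod_0, Rabs_right in Z; lra.
  - exists (RtoC 1). rewrite conj_RtoC. intros Z. apply E.
    replace (a1 * b2)%C with ((a1 * 1 * (b2 * 1) - b1 * 1 * (a2 * 1)) + b1 * a2)%C by ring.
    rewrite Z; ring.
Qed.

Theorem proposition5p2 (rho : C -> C) (K : C -> Prop) (eps : R) :
  C2_CC rho ->
  ~ holomorphic rho -> ~ antiholomorphic rho -> ~ R_affine rho ->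
  compactC K -> 0 < eps ->
  exists (phi : C -> C * C) (psi : C * C -> C * C),
    C_affine_1_2 phi /\ C_affine_2_2 psi /\
    (* sup_{z in K} || ... || < eps *)
    exists delta : R, delta < eps /\
      forall z : C, K z ->
        normC2 (subC2 (psi (times2 rho (phi z))) (z, Cconj z)) <= delta.
Proof.
  intros HC Hhol Hanti _ HK Heps.
  destruct (wirtinger_points rho HC Hhol Hanti)
    as [z1 [z2 [a1 [b1 [a2 [b2 [Lin1 [Lin2 [Ha1 Hb2]]]]]]]]].
  destruct (separating_directions a1 b1 a2 b2 Ha1 Hb2) as [al1 [al2 HD]].
  exact (separating_probe rho K eps z1 z2 a1 b1 a2 b2 al1 al2 Lin1 Lin2 HD HK Heps).
Qed.
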